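(* Let $p$ be an odd prime, $\ell\geq1$, $k\geq1$. Then $|\mathcal{C}_{k+1}((\mathbb{Z}/p^\ell\mathbb{Z})^2)|\approx (p^\ell)^{2k-1}$. More precisely, the good $(k+1)$-point configurations in $(\mathbb{Z}/p^\ell\mathbb{Z})^2$ determine $\approx(p^\ell)^{2k-1}$ equivalence classes, and the bad configurations determine $o((p^\ell)^{2k-1})$ equivalence classes.
   Context: For $R=\mathbb{Z}/p^\ell\mathbb{Z}$ and $x=(x_1,x_2),y=(y_1,y_2)\in R^2$, write $y^\perp=(y_2,-y_1)$, so $x\cdot y^\perp=x_1y_2-x_2y_1$. A $(k+1)$-point configuration is $x=(x^1,\dots,x^{k+1})\in(R^2)^{k+1}$; it is good if $x^i\cdot x^{j\perp}$ is a unit for some $i,j$, and bad otherwise. Two configurations $x,y$ are equivalent iff $x^i\cdot x^{j\perp}=y^i\cdot y^{j\perp}$ for all pairs $i,j$; $\mathcal{C}_{k+1}(R^2)$ is the set of equivalence classes (and goodness/badness is constant on classes). $X\approx Y$ means $C^{-1}Y\leq X\leq CY$ with $C$ independent of $p$ and $\ell$ (possibly depending on $k$); $o(Y)$ denotes a quantity whose ratio to $Y$ tends to $0$ as $p\to\infty$. *)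

From HB Require Import structures.
From mathcomp Require Import all_boot all_order all_algebra.
Set Implicit Arguments. Unset Strict Implicit. Unset Printing Implicit Defensive.
Import Order.TTheory GRing.Theory Num.Theory.
Local Open Scope ring_scope.

Definition pt (n : nat) : finType := ('Z_n * 'Z_n)%type.

Definition dotperp (n : nat) (x y : pt n) : 'Z_n := x.1 * y.2 - x.2 * y.1.

Definition config (n k : nat) : finType := {ffun 'I_k.+1 -> pt n}.

Definition good (n k : nat) (x : config n k) : bool :=
  [exists i : 'I_k.+1, exists j : 'I_k.+1, dotperp (x i) (x j) \is a GRing.unit].

Definition bad (n k : nat) (x : config n k) : bool := ~~ good x.

Definition cequiv (n k : nat) : rel (config n k) :=
  fun x y => [forall i : 'I_k.+1, forall j : 'I_k.+1,
                dotperp (x i) (x j) == dotperp (y i) (y j)].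

Definition classes (n k : nat) : {set {set config n k}} :=
  equivalence_partition (@cequiv n k) [set: config n k].

Definition good_classes (n k : nat) : {set {set config n k}} :=
  equivalence_partition (@cequiv n k) [set x | good x].
Definition bad_classes (n k : nat) : {set {set config n k}} :=
  equivalence_partition (@cequiv n k) [set x | bad x].

(* Two configurations are equivalent iff they have the same Gram data
   [x^i . x^j^perp], so we count Gram data.  If [u = x^i . x^j^perp] is a unit, a
   determinant-one linear map sends [x^i] to (1, 0) and [x^j] to (0, u) without changing
   the Gram data; the Gram data of such a normal form determines [u] and the other
   [k - 1] points.  Hence there are between [phi(q) q^(2k-2)] and [(k+1)^2 q^(2k-1)]
   good classes over [Z/qZ].  A bad configuration over [Z/p^(l+1)Z] has Gram data [p]
   times that of a configuration, which only matters modulo [p^l]; so there are at most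
   as many bad classes modulo [p^(l+1)] as classes modulo [p^l], and a single one
   modulo [p].  Induction on [l] bounds all classes by [2(k+1)^2 q^(2k-1)], and the bad
   ones by that bound divided by [p]. *)

From HB Require Import structures.
From mathcomp Require Import all_boot all_order all_algebra.
From mathcomp Require Import ring lra zify.
Import Order.TTheory GRing.Theory Num.Theory.
Local Open Scope ring_scope.

Definition gram {n k : nat} (x : config n k) : {ffun 'I_k.+1 * 'I_k.+1 -> 'Z_n} :=
  [ffun ij => dotperp (x ij.1) (x ij.2)].

Lemma gramE n k (x : config n k) i j : gram x (i, j) = dotperp (x i) (x j).
Proof. by rewrite ffunE. Qed.

Lemma cequivE n k (x y : config n k) : cequiv x y = (gram x == gram y).
Proof.
apply/forallP/eqP => [xy | /ffunP xy i].
  by apply/ffunP => -[i j]; rewrite !gramE; apply/eqP/(forallP (xy i)).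
by apply/forallP => j; rewrite -!gramE xy.
Qed.

Lemma card_equivalence_partition_cequiv n k (A : {set config n k}) :
  #|equivalence_partition (@cequiv n k) A| = #|gram @: A|.
Proof.
have -> : equivalence_partition (@cequiv n k) A =
          (fun d => [set y in A | gram y == d]) @: (gram @: A).
  rewrite -imset_comp; apply: eq_imset => x /=.
  by apply/setP => y; rewrite !inE cequivE eq_sym.
apply: card_in_imset => _ _ /imsetP[x Ax ->] /imsetP[y Ay ->] /setP/(_ x).
by rewrite !inE Ax eqxx => /esym/eqP.
Qed.

Definition mx2_act {n : nat} (a b c d : 'Z_n) (v : pt n) : pt n :=
  (a * v.1 + b * v.2, c * v.1 + d * v.2).

Lemma dotperp_mx2_act n (a b c d : 'Z_n) (u v : pt n) :
  dotperp (mx2_act a b c d u) (mx2_act a b c d v) = (a * d - b * c) * dotperp u v.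
Proof. rewrite /dotperp /=; ring. Qed.

Lemma gram_mx2_act {n k} {a b c d : 'Z_n} (x : config n k) : a * d - b * c = 1 ->
  gram [ffun i => mx2_act a b c d (x i)] = gram x.
Proof.
by move=> det1; apply/ffunP => -[i j]; rewrite !gramE !ffunE dotperp_mx2_act det1 mul1r.
Qed.

Section PrimePower.
Variables (p l : nat).
Hypotheses (p_pr : prime p) (l_gt0 : (0 < l)%N).
Local Notation q := (p ^ l)%N.

Lemma pexp_gt1 : (1 < q)%N.
Proof. by rewrite -(expn0 p) ltn_exp2l ?prime_gt1. Qed.

Lemma unitZpexpE (z : 'Z_q) : (z \is a GRing.unit) = ~~ (p %| z)%N.
Proof.
by rewrite -{1}(natr_Zp z) unitZpE ?pexp_gt1 // coprime_pexpl // prime_coprime.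
Qed.

Lemma nonunitZpexpE (z : 'Z_q) : z \isn't a GRing.unit -> z = p%:R * (z %/ p)%N%:R.
Proof.
by rewrite unitZpexpE negbK => /divnK pz; rewrite -natrM mulnC pz natr_Zp.
Qed.

Lemma bad_dotperp_unit_coord k (x : config q k) i0 :
  (x i0).1 \is a GRing.unit ->
  (forall j, dotperp (x i0) (x j) \isn't a GRing.unit) ->
  exists y : config q k, forall i j, dotperp (x i) (x j) = p%:R * dotperp (y i) (y j).
Proof.
set a := (x i0).1 => a_unit nonunit.
pose w j : 'Z_q := ((dotperp (x i0) (x j) : nat) %/ p)%N%:R.
exists [ffun m => ((x m).1, w m / a)] => i j; rewrite !ffunE /dotperp /=.
have wE m : p%:R * w m = a * (x m).2 - (x i0).2 * (x m).1.
  exact/esym/nonunitZpexpE/nonunit.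
transitivity (a / a * ((x i).1 * (x j).2 - (x i).2 * (x j).1)).
  by rewrite divrr // mul1r.
(* [a * (x i . x j^perp) = (x i).1 * (x i0 . x j^perp) - (x i0 . x i^perp) * (x j).1] *)
transitivity (((x i).1 * (p%:R * w j) - (p%:R * w i) * (x j).1) / a); last by ring.
rewrite !wE; ring.
Qed.

Lemma bad_dotperp_mulp k (x : config q k) : bad x ->
  exists y : config q k, forall i j, dotperp (x i) (x j) = p%:R * dotperp (y i) (y j).
Proof.
move=> x_bad; have nonunit i j : dotperp (x i) (x j) \isn't a GRing.unit.
  by apply: contra x_bad => u; apply/existsP; exists i; apply/existsP; exists j.
have [i0 u1|no_u1] := pickP (fun i => (x i).1 \is a GRing.unit).
  exact: bad_dotperp_unit_coord u1 (nonunit i0).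
have [i0 u2|no_u2] := pickP (fun i => (x i).2 \is a GRing.unit).
  pose x' : config q k := [ffun i => mx2_act 0 1 (-1) 0 (x i)].
  have det1 : 0 * 0 - 1 * -1 = 1 :> 'Z_q by ring.
  have x'E i j : dotperp (x' i) (x' j) = dotperp (x i) (x j).
    by rewrite -!gramE gram_mx2_act.
  have u1' : (x' i0).1 \is a GRing.unit by rewrite ffunE /= mul0r add0r mul1r.
  have nonunit' j : dotperp (x' i0) (x' j) \isn't a GRing.unit by rewrite x'E.
  have [y xy] := @bad_dotperp_unit_coord k x' i0 u1' nonunit'.
  by exists y => i j; rewrite -xy x'E.
exists [ffun m => ((x m).1, (((x m).2 : nat) %/ p)%N%:R)] => i j.
rewrite !ffunE /dotperp /= [in LHS](nonunitZpexpE _ (negbT (no_u2 i))).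
rewrite [in LHS](nonunitZpexpE _ (negbT (no_u2 j))); ring.
Qed.

End PrimePower.

Arguments pexp_gt1 {p l}.

Section Reduction.
Variables (n m : nat).
Hypotheses (n_gt0 : (0 < n)%N) (m_gt1 : (1 < m)%N) (m_dvd_n : (m %| n)%N).

Definition red (z : 'Z_n) : 'Z_m := (z : nat)%:R.

Lemma red_natr i : red i%:R = i%:R.
Proof.
have n_gt1 : (1 < n)%N := leq_trans m_gt1 (dvdn_leq n_gt0 m_dvd_n).
by rewrite /red val_Zp_nat // -(Zp_nat_mod m_gt1) modn_dvdm // Zp_nat_mod.
Qed.

Lemma redD a b : red (a + b) = red a + red b.
Proof. by rewrite -(natr_Zp a) -(natr_Zp b) -natrD !red_natr natrD. Qed.

Lemma redM a b : red (a * b) = red a * red b.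
Proof. by rewrite -(natr_Zp a) -(natr_Zp b) -natrM !red_natr natrM. Qed.

Lemma redN a : red (- a) = - red a.
Proof. by apply/eqP; rewrite -subr_eq0 opprK -redD addNr -(natr_Zp 0) red_natr. Qed.

Definition red_pt (v : pt n) : pt m := (red v.1, red v.2).

Lemma red_dotperp u v : red (dotperp u v) = dotperp (red_pt u) (red_pt v).
Proof. by rewrite /dotperp redD redN !redM. Qed.

End Reduction.

Lemma mulr_natr_red {d m} (w : 'Z_(d * m)) : (0 < d)%N -> (1 < m)%N ->
  d%:R * w = d%:R * ((red (d * m) m w : nat)%:R : 'Z_(d * m)).
Proof.
move=> d_gt0 m_gt1; have dm_gt1 : (1 < d * m)%N by rewrite (leq_trans m_gt1) ?leq_pmull.
by rewrite val_Zp_nat // -natrM muln_modr Zp_nat_mod // natrM natr_Zp.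
Qed.

Lemma card_gram_bad_prime {p} k : prime p -> (#|@gram p k @: [set x | bad x]| <= 1)%N.
Proof.
move=> p_pr; rewrite -(cards1 (0 : {ffun 'I_k.+1 * 'I_k.+1 -> 'Z_p})).
apply/subset_leq_card/subsetP => _ /imsetP[x + ->]; rewrite inE => x_bad.
have := @bad_dotperp_mulp p 1 p_pr isT k; rewrite expn1 => /(_ x x_bad)[y xy].
rewrite inE; apply/eqP/ffunP => -[i j].
by rewrite gramE xy pchar_Zp ?prime_gt1 // mul0r ffunE.
Qed.

Lemma card_gram_bad_succ {p l} k : prime p -> (0 < l)%N ->
  (#|@gram (p ^ l.+1) k @: [set x | bad x]| <= #|@gram (p ^ l) k @: setT|)%N.
Proof.
move=> p_pr l_gt0; have q_gt1 := pexp_gt1 p_pr l_gt0.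
have := @bad_dotperp_mulp p l.+1 p_pr isT k; rewrite expnS => bad_mulp.
pose lift (d : {ffun 'I_k.+1 * 'I_k.+1 -> 'Z_(p ^ l)}) :=
  [ffun ij => p%:R * ((d ij : nat)%:R : 'Z_(p * p ^ l))].
apply: leq_trans (leq_imset_card lift _); apply/subset_leq_card/subsetP.
move=> _ /imsetP[x + ->]; rewrite inE => /bad_mulp[y xy].
pose red_y : config (p ^ l) k := [ffun i => red_pt (p * p ^ l) (p ^ l) (y i)].
apply/imsetP; exists (gram red_y); first exact: imset_f.
have pq_gt0 : (0 < p * p ^ l)%N by rewrite muln_gt0 prime_gt0 ?expn_gt0 ?prime_gt0.
apply/ffunP => -[i j]; rewrite !ffunE xy (mulr_natr_red _ (prime_gt0 p_pr) q_gt1).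
by rewrite (red_dotperp _ _ pq_gt0 q_gt1 (dvdn_mull p (dvdnn _))).
Qed.

Section NormalForm.
Variables (n k : nat).
Hypothesis n_gt1 : (1 < n)%N.

Definition normal_config (i j : 'I_k.+1) (u : 'Z_n) (z : config n k) : config n k :=
  [ffun m => if m == i then (1, 0) else if m == j then (0, u) else z m].

Definition zero_at (i j : 'I_k.+1) : {set config n k} :=
  [set z in pffun_on ((0, 0) : pt n) (~: [set i; j]) predT].

Lemma zero_atP i j z : z \in zero_at i j -> z i = (0, 0) /\ z j = (0, 0).
Proof.
rewrite inE => /pffun_onP[/supportP z0 _].
by split; apply: z0; rewrite !inE eqxx ?orbT.
Qed.

Lemma card_zero_at {i j} : i != j -> #|zero_at i j| = ((n * n) ^ k.-1)%N.
Proof.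
move=> ij; rewrite cardsE card_pffun_on cardsCs setCK card_ord cards2 ij subn2.
by rewrite (eq_card (B := pt n)) // card_prod card_ord Zp_cast.
Qed.

Lemma card_Zp_unit : #|[set u : 'Z_n | u \is a GRing.unit]| = totient n.
Proof.
rewrite -card_units_Zp ?(ltnW n_gt1) // cardsT card_sub.
by apply: eq_card => u; rewrite inE.
Qed.

Lemma gram_good_normal (x : config n k) : good x ->
  exists i j, i != j /\
    exists2 z, z \in zero_at i j & gram x = gram (normal_config i j (dotperp (x i) (x j)) z).
Proof.
case/existsP => i /existsP[j u_unit]; exists i, j.
have ij : i != j by apply: contraTneq u_unit => ->; rewrite /dotperp mulrC subrr unitr0.
split => //; set u := dotperp _ _ in u_unit *.
(* the unimodular map sending x i to (1, 0) and x j to (0, u) *)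
pose g := mx2_act ((x j).2 / u) (- (x j).1 / u) (- (x i).2) (x i).1.
have det1 : (x j).2 / u * (x i).1 - - (x j).1 / u * - (x i).2 = 1.
  by rewrite -(divrr u_unit) /u /dotperp; ring.
exists [ffun m => if (m == i) || (m == j) then (0, 0) else g (x m)].
  rewrite inE; apply/pffun_onP; split=> //; apply/supportP => m.
  by rewrite !inE negbK ffunE => ->.
rewrite -(gram_mx2_act x det1); congr gram; apply/ffunP => m; rewrite !ffunE.
have [-> | _] := eqVneq m i.
  by congr (_, _); rewrite -?(divrr u_unit) /u /dotperp /=; ring.
have [-> | _] //= := eqVneq m j.
by congr (_, _); rewrite -?(divrr u_unit) /u /dotperp /=; ring.
Qed.

Lemma good_normal_config i j u z : i != j -> u \is a GRing.unit ->
  good (normal_config i j u z).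
Proof.
move=> ij u_unit; apply/existsP; exists i; apply/existsP; exists j.
have ji : (j == i) = false by rewrite eq_sym (negbTE ij).
by rewrite /dotperp !ffunE ji !eqxx /= mul1r mul0r subr0.
Qed.

Lemma gram_normal_config_inj {i j u1 u2 z1 z2} : i != j -> u1 \is a GRing.unit ->
  z1 \in zero_at i j -> z2 \in zero_at i j ->
  gram (normal_config i j u1 z1) = gram (normal_config i j u2 z2) -> u1 = u2 /\ z1 = z2.
Proof.
move=> ij u_unit /zero_atP[z1i z1j] /zero_atP[z2i z2j] /ffunP eq_gram.
have ji : (j == i) = false by rewrite eq_sym (negbTE ij).
have eq_dot a b : dotperp (normal_config i j u1 z1 a) (normal_config i j u1 z1 b) =
                  dotperp (normal_config i j u2 z2 a) (normal_config i j u2 z2 b).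
  by have := eq_gram (a, b); rewrite !gramE.
have u12 : u1 = u2.
  by have := eq_dot i j; rewrite /dotperp !ffunE ji !eqxx /= !mul1r !mul0r !subr0.
split=> //; subst u2; apply/ffunP => m.
have [-> | mi] := eqVneq m i; first by rewrite z1i z2i.
have [-> | mj] := eqVneq m j; first by rewrite z1j z2j.
(* pairing with (1, 0) and (0, u1) reads off the two coordinates of z m *)
have := eq_dot i m; have := eq_dot j m.
rewrite /dotperp !ffunE ji !eqxx (negbTE mi) (negbTE mj) /= !mul0r !mul1r !sub0r !subr0.
move=> /oppr_inj/(mulrI u_unit) eq1 eq2.
by rewrite [z1 m]surjective_pairing [z2 m]surjective_pairing eq1 eq2.
Qed.

Lemma card_gram_good_le :
  (#|gram @: [set x : config n k | good x]| <= k.+1 * k.+1 * (n * (n * n) ^ k.-1))%N.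
Proof.
pose pairs := [set ij : 'I_k.+1 * 'I_k.+1 | ij.1 != ij.2].
pose F (ij : 'I_k.+1 * 'I_k.+1) := (fun uz : 'Z_n * config n k =>
  gram (normal_config ij.1 ij.2 uz.1 uz.2)) @: setX setT (zero_at ij.1 ij.2).
have card_F ij : ij \in pairs -> (#|F ij| <= n * (n * n) ^ k.-1)%N.
  rewrite inE => ij12; apply: leq_trans (leq_imset_card _ _) _.
  by rewrite cardsX cardsT card_ord Zp_cast // card_zero_at.
apply: (@leq_trans #|cover (F @: pairs)|).
  apply/subset_leq_card/subsetP => _ /imsetP[x + ->]; rewrite inE => /gram_good_normal.
  case=> i [j [ij [z z0 ->]]]; apply/bigcupP; exists (F (i, j)); first by rewrite imset_f ?inE.
  by apply/imsetP; exists (dotperp (x i) (x j), z); rewrite //= in_setX in_setT.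
apply: leq_trans (leq_card_cover _).1 _.
apply: (@leq_trans (\sum_(A in F @: pairs) (n * (n * n) ^ k.-1))).
  by apply: leq_sum => _ /imsetP[ij /card_F le_F ->].
rewrite sum_nat_const leq_mul2r; apply/orP; right.
apply: leq_trans (leq_imset_card _ _) _; apply: leq_trans (max_card _) _.
by rewrite card_prod card_ord.
Qed.

Lemma card_gram_good_ge (i j : 'I_k.+1) : i != j ->
  (totient n * (n * n) ^ k.-1 <= #|gram @: [set x : config n k | good x]|)%N.
Proof.
move=> ij; rewrite -card_Zp_unit -(card_zero_at ij) -cardsX.
pose f (uz : 'Z_n * config n k) := gram (normal_config i j uz.1 uz.2).
rewrite -(@card_in_imset _ _ f); last first.
  move=> [u1 z1] [u2 z2]; rewrite !in_setX /= inE => /andP[u1_unit z1_0] /andP[_ z2_0] eq_f.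
  by have [-> ->] := gram_normal_config_inj ij u1_unit z1_0 z2_0 eq_f.
apply/subset_leq_card/subsetP => _ /imsetP[[u z] + ->]; rewrite !inE /= => /andP[u_unit _].
by apply: imset_f; rewrite inE good_normal_config.
Qed.

End NormalForm.

Arguments card_gram_good_ge {n k} n_gt1 {i j}.

Section Counting.
Variable k : nat.
Hypothesis k_gt0 : (0 < k)%N.

Local Notation all_card n := #|@gram n k @: [set: config n k]|.
Local Notation good_card n := #|@gram n k @: [set x : config n k | good x]|.
Local Notation bad_card n := #|@gram n k @: [set x : config n k | bad x]|.
Local Notation K := (k.+1 * k.+1)%N.
Local Notation N := (2 * k - 1)%N.

Lemma expn_normal_forms n : (n * (n * n) ^ k.-1)%N = (n ^ N)%N.
Proof.
case: k k_gt0 => // k' _; rewrite /= mulnn -expnM -expnS; congr expn; lia.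
Qed.

Lemma card_gram_le_good_bad n : (all_card n <= good_card n + bad_card n)%N.
Proof.
have -> : [set: config n k] = [set x | good x] :|: [set x | bad x].
  by apply/setP => x; rewrite !inE orbN.
by rewrite imsetU leq_card_setU.
Qed.

Lemma card_gram_good_upper {n} : (1 < n)%N -> (good_card n <= K * n ^ N)%N.
Proof. by move=> n_gt1; rewrite -expn_normal_forms card_gram_good_le. Qed.

Lemma card_gram_good_lower {p l} : prime p -> odd p -> (0 < l)%N ->
  (2 * (p ^ l) ^ N <= 3 * good_card (p ^ l))%N.
Proof.
move=> p_pr p_odd l_gt0; have p_gt2 := odd_prime_gt2 p_odd p_pr.
have ord0_max : (ord0 : 'I_k.+1) != ord_max by rewrite -val_eqE /= eq_sym -lt0n.
have := card_gram_good_ge (pexp_gt1 p_pr l_gt0) ord0_max.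
rewrite totient_pfactor // -expn_normal_forms.
set Z := ((_ * _) ^ _)%N; set G := #|_|.
move=> ge_good; rewrite -{1}(prednK l_gt0) expnS.
have := prednK (prime_gt0 p_pr); nia.
Qed.

Lemma card_gram_upper {p l} : prime p -> odd p -> (0 < l)%N ->
  (all_card (p ^ l) <= 2 * K * (p ^ l) ^ N)%N.
Proof.
move=> p_pr p_odd; have p_gt2 := odd_prime_gt2 p_odd p_pr.
have N_gt0 : (0 < N)%N by lia.
have le_good m (m_gt0 : (0 < m)%N) := card_gram_good_upper (pexp_gt1 p_pr m_gt0).
case: l => // l _; elim: l => [|l IH].
  have := card_gram_bad_prime k p_pr; have := le_good 1%N isT.
  have := card_gram_le_good_bad (p ^ 1); rewrite !expn1.
  have : (1 <= p ^ N)%N by rewrite expn_gt0 prime_gt0.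
  nia.
have := card_gram_bad_succ k p_pr (ltn0Sn l); have := le_good l.+2 isT.
have := card_gram_le_good_bad (p ^ l.+2).
have : (3 * (p ^ l.+1) ^ N <= (p ^ l.+2) ^ N)%N.
  rewrite [(p ^ l.+2)%N]expnS expnMn leq_mul2r (leq_trans p_gt2) ?orbT //.
  by rewrite -{1}(expn1 p) leq_pexp2l // prime_gt0.
nia.
Qed.

Lemma card_gram_bad_upper {p l} : prime p -> odd p -> (0 < l)%N ->
  (p * bad_card (p ^ l) <= 2 * K * (p ^ l) ^ N)%N.
Proof.
move=> p_pr p_odd; have N_gt0 : (0 < N)%N by lia.
have p_le : forall m, (p * m ^ N <= (p * m) ^ N)%N.
  by move=> m; rewrite expnMn leq_mul2r -{1}(expn1 p) leq_pexp2l ?N_gt0 ?orbT // prime_gt0.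
case: l => // -[_ | l _].
  have := card_gram_bad_prime k p_pr; have := p_le 1%N; rewrite !expn1 !muln1.
  nia.
have := card_gram_bad_succ k p_pr (ltn0Sn l); have := card_gram_upper p_pr p_odd (ltn0Sn l).
have := p_le (p ^ l.+1)%N; rewrite -expnS; nia.
Qed.

End Counting.

Lemma natr_within_factor (a y c : nat) : (0 < c)%N -> (y <= c * a)%N -> (a <= c * y)%N ->
  (c%:R : rat)^-1 * y%:R <= (a%:R : rat) <= c%:R * y%:R.
Proof.
move=> c_gt0 le_y le_a; rewrite -natrM ler_nat le_a andbT.
by rewrite ler_pdivrMl ?ltr0n // -natrM ler_nat.
Qed.

Lemma natr_le_eps (c p b y : nat) (eps : rat) : 0 < eps ->
  (Num.bound (c%:R / eps) < p)%N -> (p * b <= c * y)%N -> b%:R <= eps * y%:R.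
Proof.
move=> eps_gt0 bound_lt_p le_b.
have c_lt : c%:R < p%:R * eps.
  rewrite -ltr_pdivrMr //; apply: lt_le_trans (archi_boundP _) _.
    by rewrite divr_ge0 // ltW.
  by rewrite ler_nat ltnW.
have {}le_b : p%:R * b%:R <= c%:R * y%:R :> rat by rewrite -!natrM ler_nat.
have p_gt0 : 0 < p%:R :> rat by rewrite ltr0n (leq_ltn_trans (leq0n _) bound_lt_p).
have : c%:R * y%:R <= p%:R * eps * y%:R by rewrite ler_wpM2r // ltW.
nra.
Qed.

Theorem theorem6p1 (k : nat) (hk : (1 <= k)%N) :
  (exists C : rat, 0 < C /\
    forall (p l : nat), prime p -> odd p -> (1 <= l)%N ->
      let Y : rat := ((p ^ l) ^ (2 * k - 1))%:R in
      (C^-1 * Y <= (#|classes (p ^ l) k|)%:R <= C * Y) /\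
      (C^-1 * Y <= (#|good_classes (p ^ l) k|)%:R <= C * Y)) /\
  (forall eps : rat, 0 < eps ->
    exists P : nat, forall (p l : nat), prime p -> odd p -> (P < p)%N -> (1 <= l)%N ->
      (#|bad_classes (p ^ l) k|)%:R <= eps * ((p ^ l) ^ (2 * k - 1))%:R).
Proof.
rewrite /classes /good_classes /bad_classes.
split.
  exists (2 * (k.+1 * k.+1))%:R; split => // p l p_pr p_odd l_gt0.
  rewrite !card_equivalence_partition_cequiv.
  have le_all := card_gram_upper k hk p_pr p_odd l_gt0.
  have le_good := card_gram_good_upper k hk (pexp_gt1 p_pr l_gt0).
  have ge_good := card_gram_good_lower k hk p_pr p_odd l_gt0.
  have good_le_all := subset_leq_card (imsetS (@gram (p ^ l) k) (subsetT [set x | good x])).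
  by split; apply: natr_within_factor => //; nia.
move=> eps eps_gt0; exists (Num.bound ((2 * (k.+1 * k.+1))%:R / eps)).
move=> p l p_pr p_odd P_lt_p l_gt0; rewrite card_equivalence_partition_cequiv.
exact: natr_le_eps eps_gt0 P_lt_p (card_gram_bad_upper k hk p_pr p_odd l_gt0).
Qed.
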